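(* Let $n,r\ge1$. The sequence \[ 0\to\mathbb{R}\to\mathcal{S}_r^-\Lambda^0(\mathbb{R}^n)\xrightarrow{d}\mathcal{S}_r^-\Lambda^1(\mathbb{R}^n)\xrightarrow{d}\cdots\xrightarrow{d}\mathcal{S}_r^-\Lambda^{n-1}(\mathbb{R}^n)\xrightarrow{d}\mathcal{S}_r^-\Lambda^n(\mathbb{R}^n)\to0, \] where $\mathbb{R}\to\mathcal{S}_r^-\Lambda^0$ is the inclusion of constant functions and the other maps are the exterior derivative, is exact.
   Context: Fix $n\ge1$. For a multi-index $\alpha\in\mathbb{N}^n$ and a subset $\sigma=\{\sigma(1)<\dots<\sigma(k)\}\subset\{1,\dots,n\}$, the form monomial is $x^\alpha dx_\sigma:=x_1^{\alpha_1}\cdots x_n^{\alpha_n}\,dx_{\sigma(1)}\wedge\cdots\wedge dx_{\sigma(k)}$, of degree $|\alpha|$. $\mathcal{H}_r\Lambda^k(\mathbb{R}^n)$ is the span of form monomials with $|\alpha|=r$, $|\sigma|=k$ (it is $0$ if $r<0$ or $k\notin\{0,\dots,n\}$), and $\mathcal{P}_r\Lambda^k:=\bigoplus_{j=0}^r\mathcal{H}_j\Lambda^k$ ($=0$ if $r<0$). $d$ is the exterior derivative. The Koszul operator $\kappa$ is defined on monomials by $\kappa(x^\alpha dx_\sigma)=\sum_{i=1}^k(-1)^{i+1}x^\alpha x_{\sigma(i)}\,dx_{\sigma(1)}\wedge\cdots\wedge\widehat{dx_{\sigma(i)}}\wedge\cdots\wedge dx_{\sigma(k)}$ and extended linearly.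 The linear degree is $\mathrm{ldeg}(x^\alpha dx_\sigma):=\#\{i\notin\sigma:\alpha_i=1\}$, and $\mathcal{H}_{r,l}\Lambda^k$ is the span of form monomials in $\mathcal{H}_r\Lambda^k$ with linear degree $\ge l$. Define $\mathcal{J}_r\Lambda^k:=\sum_{l\ge1}\kappa\,\mathcal{H}_{r+l-1,l}\Lambda^{k+1}$, the serendipity space $\mathcal{S}_r\Lambda^k:=\mathcal{P}_r\Lambda^k+\mathcal{J}_r\Lambda^k+d\,\mathcal{J}_{r+1}\Lambda^{k-1}$ (forms of degree $-1$ or $n+1$ are $0$), and for $r\ge1$ the trimmed serendipity space $\mathcal{S}_r^-\Lambda^k:=\mathcal{S}_{r-1}\Lambda^k+\kappa\,\mathcal{S}_{r-1}\Lambda^{k+1}$, all on $\mathbb{R}^n$. *)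

From HB Require Import structures.
From mathcomp Require Import all_boot all_order all_algebra.
From Stdlib Require List.
Set Implicit Arguments. Unset Strict Implicit. Unset Printing Implicit Defensive.
Import Order.TTheory GRing.Theory Num.Theory.
Local Open Scope ring_scope.

Section Forms.
Variables (R : realFieldType) (n : nat).

(* a form monomial x^alpha dx_sigma is the pair (alpha, sigma) *)
Definition mon := ({ffun 'I_n -> nat} * {set 'I_n})%type.
(* a (polynomial) form = its coefficient function on form monomials;
   all forms in the spaces below have finite support *)
Definition pform := mon -> R.

Definition mdeg (a : {ffun 'I_n -> nat}) : nat := (\sum_i a i)%N.
Definition addE (a : {ffun 'I_n -> nat}) (i : 'I_n) : {ffun 'I_n -> nat} :=
  [ffun j => (a j + (j == i))%N].
Definition subE (a : {ffun 'I_n -> nat}) (i : 'I_n) : {ffun 'I_n -> nat} :=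
  [ffun j => (a j - (j == i))%N].
Definition nbelow (t : {set 'I_n}) (i : 'I_n) : nat := #|[set l in t | (l < i)%N]|.

(* exterior derivative, coefficientwise:
   d (x^a dx_s) = sum_{i notin s} a_i x^(a-e_i) dx_i /\ dx_s *)
Definition dform (f : pform) : pform := fun m =>
  \sum_(i in m.2) (-1) ^+ nbelow m.2 i * ((m.1 i).+1)%:R * f (addE m.1 i, m.2 :\ i).

(* Koszul operator, coefficientwise:
   kappa (x^a dx_s) = sum_i (-1)^(i+1) x^a x_{s(i)} dx_{s - s(i)} *)
Definition kform (f : pform) : pform := fun m =>
  \sum_(j in ~: m.2 | (0 < m.1 j)%N) (-1) ^+ nbelow m.2 j * f (subE m.1 j, j |: m.2).

Definition ldeg (m : mon) : nat := #|[set i | (i \notin m.2) && (m.1 i == 1%N)]|.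

Definition supported (P : mon -> bool) (f : pform) : Prop :=
  forall m, ~~ P m -> f m = 0.

Definition Hsp (r k : nat) := supported (fun m => (mdeg m.1 == r) && (#|m.2| == k)).
Definition Hlsp (r l k : nat) :=
  supported (fun m => [&& mdeg m.1 == r, #|m.2| == k & (l <= ldeg m)%N]).
Definition Psp (r k : nat) := supported (fun m => (mdeg m.1 <= r)%N && (#|m.2| == k)).

(* J_r Lambda^k = sum_{l >= 1} kappa H_{r+l-1,l} Lambda^{k+1} (finite sums of elements) *)
Definition Jsp (r k : nat) (f : pform) : Prop :=
  exists s : seq (nat * pform),
    (forall p, List.In p s -> (1 <= p.1)%N /\ Hlsp (r + p.1 - 1) p.1 k.+1 p.2)
    /\ forall m, f m = \sum_(p <- s) kform p.2 m.

Definition dJsp (r k : nat) (f : pform) : Prop :=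
  match k with
  | 0 => forall m, f m = 0
  | k'.+1 => exists g, Jsp r.+1 k' g /\ forall m, f m = dform g m
  end.

Definition Ssp (r k : nat) (f : pform) : Prop :=
  exists p j h, Psp r k p /\ Jsp r k j /\ dJsp r k h /\
    forall m, f m = p m + j m + h m.

(* trimmed serendipity space S_r^- Lambda^k  (meaningful for r >= 1) *)
Definition Sminus (r k : nat) (f : pform) : Prop :=
  exists a b, Ssp r.-1 k a /\ Ssp r.-1 k.+1 b /\ forall m, f m = a m + kform b m.

Definition constf (c : R) : pform := fun m =>
  if (m.1 == [ffun => 0%N]) && (m.2 == set0) then c else 0.

End Forms.

(* Everything rests on three identities for the exterior derivative d and the
   Koszul operator kappa: d d = 0, kappa kappa = 0 and the homotopy formula
   d kappa + kappa d = (deg + k) on k-forms, deg being the polynomial degree.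
   Each is checked monomial by monomial after splitting d and kappa into their
   one-variable summands, which pairwise anticommute except for the diagonal.
   The serendipity spaces are d-stable: d maps the l = 1 part of J_r into P_r
   and the other parts, which lie in J_(r+1), into d J_(r+1). Hence
   d (a + kappa b) = d a + (deg + k + 1) b - kappa (d b) stays in S_r^-.
   Conversely, a closed (k+1)-form f equals d (kappa f') where f' divides each
   homogeneous part of f by deg + k + 1, and kappa f' lies in S_r^- since kappa
   kills the kappa-part of f. A closed 0-form satisfies deg f = 0, so it is
   constant. *)

From HB Require Import structures.
From mathcomp Require Import all_boot all_order all_algebra.
From mathcomp Require Import ring zify.
From Stdlib Require List.
Set Implicit Arguments. Unset Strict Implicit. Unset Printing Implicit Defensive.
Import Order.TTheory GRing.Theory Num.Theory.
Local Open Scope ring_scope.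

(** * Koszul identities *)

Section Nbelow.
Variable n : nat.
Implicit Types (s t : {set 'I_n}) (i j : 'I_n).

Lemma nbelowU1 t i j : i \notin t -> nbelow (i |: t) j = (nbelow t j + (i < j))%N.
Proof.
move=> it; rewrite /nbelow; case: ltnP => ij.
- have -> : [set l in i |: t | (l < j)%N] = i |: [set l in t | (l < j)%N].
    by apply/setP=> l; rewrite !inE; case: eqVneq => [->|].
  by rewrite cardsU1 inE (negbTE it) addn1.
- have -> : [set l in i |: t | (l < j)%N] = [set l in t | (l < j)%N].
    apply/setP=> l; rewrite !inE; case: eqVneq => [->|] //=.
    by rewrite ltnNge ij andbF.
  by rewrite addn0.
Qed.

Lemma nbelowD1 s i j : i \in s -> nbelow s j = (nbelow (s :\ i) j + (i < j))%N.
Proof. by move=> iS; rewrite -nbelowU1 ?setD11 // setD1K. Qed.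

Lemma nbelowU1id s i : nbelow (i |: s) i = nbelow s i.
Proof.
by rewrite /nbelow; apply: eq_card => l; rewrite !inE; case: eqVneq => [->|]; rewrite ?ltnn ?andbF.
Qed.

Lemma nbelowD1id s i : nbelow (s :\ i) i = nbelow s i.
Proof.
by rewrite /nbelow; apply: eq_card => l; rewrite !inE; case: eqVneq => [->|]; rewrite ?ltnn ?andbF.
Qed.

End Nbelow.

Lemma sum_antisym (R : numDomainType) (I : finType) (G : I -> I -> R) :
  (forall i j, G i j = - G j i) -> \sum_i \sum_j G i j = 0.
Proof.
move=> GN; set S := (X in X = 0).
have SN : S = - S.
  rewrite {2}/S exchange_big /= -sumrN; apply: eq_bigr => i _.
  by rewrite -sumrN; apply: eq_bigr => j _; rewrite GN.
have : S *+ 2 == 0 by rewrite mulr2n {1}SN addNr.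
by rewrite mulrn_eq0 => /eqP.
Qed.

Lemma signr_ltn {R : pzRingType} n (i j : 'I_n) :
  i != j -> (-1) ^+ (i < j) = - (-1) ^+ (j < i) :> R.
Proof.
by case: ltngtP => [_ _|_ _|/val_inj ->]; rewrite ?eqxx ?expr1 ?expr0 ?opprK.
Qed.

Section Forms.
Variables (R : realFieldType) (n : nat).
Local Notation pform := (pform R n).
Implicit Types (a : {ffun 'I_n -> nat}) (s t : {set 'I_n}) (i j : 'I_n) (f g p q h : pform).

Lemma addE_neq a i j : j != i -> addE a i j = a j.
Proof. by move=> ji; rewrite ffunE (negbTE ji) addn0. Qed.

Lemma subE_neq a i j : j != i -> subE a i j = a j.
Proof. by move=> ji; rewrite ffunE (negbTE ji) subn0. Qed.

Lemma addEC a i j : addE (addE a i) j = addE (addE a j) i.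
Proof. by apply/ffunP=> l; rewrite !ffunE -!addnA [((l == j) + _)%N]addnC. Qed.

Lemma subEC a i j : subE (subE a i) j = subE (subE a j) i.
Proof. by apply/ffunP=> l; rewrite !ffunE -!subnDA addnC. Qed.

Lemma addE_subEC a i j : i != j -> addE (subE a j) i = subE (addE a i) j.
Proof.
move=> ij; apply/ffunP=> l; rewrite !ffunE.
by case: (eqVneq l i) => [->|_]; rewrite ?(negbTE ij) ?subn0 ?addn0.
Qed.

Lemma addEK a i : subE (addE a i) i = a.
Proof. by apply/ffunP=> l; rewrite !ffunE addnK. Qed.

Lemma subEK a i : (0 < a i)%N -> addE (subE a i) i = a.
Proof.
by move=> ai; apply/ffunP=> l; rewrite !ffunE; case: eqVneq => [->|_]; rewrite ?subnK ?subn0 ?addn0.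
Qed.

Lemma mdeg_addE a i : mdeg (addE a i) = (mdeg a).+1.
Proof.
rewrite /mdeg (eq_bigr (fun j => a j + (j == i))%N) => [|j _]; last by rewrite ffunE.
rewrite big_split /= -addn1; congr (_ + _)%N.
by rewrite (bigD1 i) //= eqxx big1 // => j /negbTE->.
Qed.

Lemma mdeg_subE a i : (0 < a i)%N -> (mdeg (subE a i)).+1 = mdeg a.
Proof. by move=> ai; rewrite -(mdeg_addE _ i) subEK. Qed.

(* the i-th summands dx_i /\ d/dx_i of [dform] and x_i (d/dx_i -| _) of [kform] *)
Definition dpart i f : pform := fun m =>
  if i \in m.2 then (-1) ^+ nbelow m.2 i * ((m.1 i).+1)%:R * f (addE m.1 i, m.2 :\ i) else 0.

Definition kpart j f : pform := fun m =>
  if (j \notin m.2) && (0 < m.1 j)%N then (-1) ^+ nbelow m.2 j * f (subE m.1 j, j |: m.2) else 0.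

Lemma dformE f m : dform f m = \sum_i dpart i f m.
Proof. by rewrite /dform big_mkcond. Qed.

Lemma kformE f m : kform f m = \sum_j kpart j f m.
Proof. by rewrite /kform big_mkcond; apply: eq_bigr => j _; rewrite inE. Qed.

Lemma dpart_sum i g (F : 'I_n -> pform) :
  (forall m, g m = \sum_j F j m) -> forall m, dpart i g m = \sum_j dpart i (F j) m.
Proof. by move=> gE m; rewrite /dpart gE; case: ifP => _; [exact: mulr_sumr | rewrite big1]. Qed.

Lemma kpart_sum j g (F : 'I_n -> pform) :
  (forall m, g m = \sum_i F i m) -> forall m, kpart j g m = \sum_i kpart j (F i) m.
Proof. by move=> gE m; rewrite /kpart gE; case: ifP => _; [exact: mulr_sumr | rewrite big1]. Qed.

Lemma dpartC i j f m : dpart i (dpart j f) m = - dpart j (dpart i f) m.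
Proof.
case: m => a s; rewrite /dpart /=.
have [<-|ij] := eqVneq i j; first by rewrite setD11 mulr0 if_same oppr0.
rewrite !in_setD1 ij eq_sym ij /=.
case iS: (i \in s); case jS: (j \in s); rewrite ?mulr0 ?oppr0 //.
have ji : j != i by rewrite eq_sym.
rewrite (addE_neq _ ij) (addE_neq _ ji) addEC !setDDl [[set j] :|: _]setUC.
rewrite (nbelowD1 j iS) (nbelowD1 i jS) !exprD.
rewrite (signr_ltn ij); move: (f _) => F; ring.
Qed.

Lemma kpartC i j f m : kpart i (kpart j f) m = - kpart j (kpart i f) m.
Proof.
case: m => a s; rewrite /kpart /=.
have [<-|ij] := eqVneq i j; first by rewrite setU11 /= mulr0 if_same oppr0.
have ji : j != i by rewrite eq_sym.
rewrite !in_setU1 (negbTE ij) (negbTE ji) /= (subE_neq _ ij) (subE_neq _ ji).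
case iS: (i \in s); case jS: (j \in s); rewrite /= ?mulr0 ?if_same ?oppr0 //.
case: (0 < a i)%N; case: (0 < a j)%N; rewrite /= ?mulr0 ?oppr0 //.
rewrite subEC setUCA (nbelowU1 j (negbT iS)) (nbelowU1 i (negbT jS)) !exprD.
by rewrite (signr_ltn ij); move: (f _) => F; ring.
Qed.

Lemma signr_nbelowD1U1 s i j : i \in s -> j \notin s -> i != j ->
  (-1) ^+ nbelow s j * (-1) ^+ nbelow (j |: s) i =
  - ((-1) ^+ nbelow s i * (-1) ^+ nbelow (s :\ i) j) :> R.
Proof.
move=> iS jS ij; rewrite (nbelowD1 j iS) nbelowU1 // !exprD.
by case: ltngtP ij => [_ _|_ _|/val_inj ->]; rewrite ?eqxx ?expr0 ?expr1 //; ring.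
Qed.

Lemma dpart_kpartC i j f m : i != j -> dpart i (kpart j f) m = - kpart j (dpart i f) m.
Proof.
case: m => a s ij; rewrite /dpart /kpart /=.
have ji : j != i by rewrite eq_sym.
rewrite in_setD1 in_setU1 ji (negbTE ij) /= (addE_neq _ ji) (subE_neq _ ij) (addE_subEC _ ij).
have -> : (j |: s) :\ i = j |: (s :\ i).
  by apply/setP=> l; rewrite !inE; case: eqVneq => // ->; rewrite (negbTE ij).
case iS: (i \in s); case jS: (j \in s); rewrite /= ?mulr0 ?if_same ?oppr0 //.
case: (0 < a j)%N; rewrite /= ?mulr0 ?oppr0 //.
rewrite !mulrA (signr_nbelowD1U1 iS (negbT jS) ij); move: (f _) => F; ring.
Qed.

Lemma dpart_kpart_id i f m :
  dpart i (kpart i f) m + kpart i (dpart i f) m = (m.1 i + (i \in m.2))%:R * f m.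
Proof.
case: m => a s; rewrite /dpart /kpart /=; case iS: (i \in s) => /=.
  rewrite setD11 ffunE eqxx addn1 /= addEK setD1K // nbelowD1id addr0.
  by rewrite mulrAC signrMK mulrC.
case: (posnP (a i)) => [->|ai]; first by rewrite add0r mul0r.
rewrite add0r setU11 nbelowU1id subEK // setU1K ?iS //.
by rewrite ffunE eqxx subn1 prednK // mulrA signrMK addn0.
Qed.

Lemma dform_dform f m : dform (dform f) m = 0.
Proof.
rewrite dformE (eq_bigr _ (fun i _ => dpart_sum i (dformE f) m)).
exact: sum_antisym (fun i j => dpartC i j f m).
Qed.

Lemma kform_kform f m : kform (kform f) m = 0.
Proof.
rewrite kformE (eq_bigr _ (fun j _ => kpart_sum j (kformE f) m)).
exact: sum_antisym (fun i j => kpartC i j f m).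
Qed.

Lemma dform_kform_homotopy f m :
  dform (kform f) m + kform (dform f) m = (mdeg m.1 + #|m.2|)%:R * f m.
Proof.
rewrite dformE kformE (eq_bigr _ (fun i _ => dpart_sum i (kformE f) m)).
rewrite (eq_bigr _ (fun j _ => kpart_sum j (dformE f) m)) [X in _ + X]exchange_big -big_split.
transitivity (\sum_i (m.1 i + (i \in m.2))%:R * f m).
  apply: eq_bigr => i _; rewrite -big_split (bigD1 i) //= dpart_kpart_id big1 ?addr0 // => j ji.
  by rewrite dpart_kpartC 1?eq_sym // addNr.
rewrite -mulr_suml -natr_sum big_split /= -sum1_card [in RHS]big_mkcond.
by congr ((_ + _)%:R * _); apply: eq_bigr => i _; case: (i \in m.2).
Qed.

(** * Linearity and supports *)

Definition pzero : pform := fun=> 0.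
Arguments pzero _ /.

Definition dscale (c : nat -> R) f : pform := fun m => c (mdeg m.1) * f m.

Lemma eq_dform f g : f =1 g -> dform f =1 dform g.
Proof. by move=> fg m; apply: eq_bigr => i _; rewrite fg. Qed.

Lemma eq_kform f g : f =1 g -> kform f =1 kform g.
Proof. by move=> fg m; apply: eq_bigr => j _; rewrite fg. Qed.

Lemma dform0 : dform pzero =1 pzero.
Proof. by move=> m; rewrite /dform big1 // => i _; rewrite mulr0. Qed.

Lemma kform0 : kform pzero =1 pzero.
Proof. by move=> m; rewrite /kform big1 // => j _; rewrite mulr0. Qed.

Lemma dformD f g : dform (f \+ g) =1 dform f \+ dform g.
Proof. by move=> m; rewrite /dform /= -big_split; apply: eq_bigr => i _; rewrite mulrDr. Qed.

Lemma kformD f g : kform (f \+ g) =1 kform f \+ kform g.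
Proof. by move=> m; rewrite /kform /= -big_split; apply: eq_bigr => j _; rewrite mulrDr. Qed.

Lemma dform_dscale c f m : dform (dscale c f) m = c (mdeg m.1).+1 * dform f m.
Proof.
rewrite /dform mulr_sumr; apply: eq_bigr => i _.
by rewrite /dscale /= mdeg_addE mulrCA mulrA.
Qed.

Lemma kform_dscale c f m : kform (dscale (c \o succn) f) m = c (mdeg m.1) * kform f m.
Proof.
rewrite /kform mulr_sumr; apply: eq_bigr => j /andP[_ aj].
by rewrite /dscale /= mdeg_subE // mulrCA.
Qed.

Lemma supported_sub (P Q : mon n -> bool) f :
  (forall m, P m -> Q m) -> supported P f -> supported Q f.
Proof. by move=> PQ fP m /negP nQ; apply: fP; apply/negP=> /PQ. Qed.

Lemma supported_eq (P : mon n -> bool) f g : supported P f -> f =1 g -> supported P g.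
Proof. by move=> fP fg m nP; rewrite -fg fP. Qed.

Lemma supportedD (P : mon n -> bool) f g :
  supported P f -> supported P g -> supported P (f \+ g).
Proof. by move=> fP gP m nP; rewrite /= fP // gP // addr0. Qed.

Lemma supported_dscale (P : mon n -> bool) c f : supported P f -> supported P (dscale c f).
Proof. by move=> fP m nP; rewrite /dscale fP // mulr0. Qed.

Lemma dform_supported (P : nat -> nat -> bool) f :
  supported (fun m => P (mdeg m.1) #|m.2|) f ->
  supported (fun m => (0 < #|m.2|)%N && P (mdeg m.1).+1 #|m.2|.-1) (dform f).
Proof.
move=> fP [a s] /= nP; rewrite /dform big1 // => i /= iS.
by rewrite fP ?mulr0 //= mdeg_addE; move: nP; rewrite (cardsD1 i s) iS.
Qed.

Lemma kform_supported (P : nat -> nat -> bool) f :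
  supported (fun m => P (mdeg m.1) #|m.2|) f ->
  supported (fun m => (0 < mdeg m.1)%N && P (mdeg m.1).-1 #|m.2|.+1) (kform f).
Proof.
move=> fP [a s] /= nP; rewrite /kform big1 // => j /= /andP[]; rewrite inE => jS aj.
by rewrite fP ?mulr0 //= cardsU1 (negbTE jS); move: nP; rewrite -(mdeg_subE aj).
Qed.

Definition Lsp k : pform -> Prop := supported (fun m => #|m.2| == k).

Lemma dform_Lsp k f : Lsp k f -> Lsp k.+1 (dform f).
Proof.
move/(dform_supported (P := fun _ c => c == k)); apply: supported_sub => m /=.
by case: #|m.2|.
Qed.

Lemma kform_Lsp k f : Lsp k.+1 f -> Lsp k (kform f).
Proof.
by move/(kform_supported (P := fun _ c => c == k.+1)); apply: supported_sub => m /andP[].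
Qed.

Lemma kform_Lsp0 f : Lsp 0 f -> kform f =1 pzero.
Proof. by move=> fL m; rewrite (kform_supported (P := fun _ c => c == 0) fL) //= andbF. Qed.

Lemma dform_Hsp r k f : Hsp r.+1 k f -> Hsp r k.+1 (dform f).
Proof.
move/(dform_supported (P := fun d c => (d == r.+1) && (c == k))); apply: supported_sub.
by move=> m /=; case: #|m.2|.
Qed.

Lemma kform_Hsp r k f : Hsp r k.+1 f -> Hsp r.+1 k (kform f).
Proof.
move/(kform_supported (P := fun d c => (d == r) && (c == k.+1))); apply: supported_sub.
by move=> m /=; case: (mdeg m.1).
Qed.

Lemma Psp_dform r k f : Psp r k f -> Psp r k.+1 (dform f).
Proof.
move/(dform_supported (P := fun d c => (d <= r)%N && (c == k))); apply: supported_sub.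
by move=> m /=; case: #|m.2| => //= c /andP[/ltnW ->].
Qed.

Lemma Hsp_Psp r k f : Hsp r k f -> Psp r k f.
Proof. by apply: supported_sub => m /andP[/eqP-> ->]; rewrite leqnn. Qed.

Lemma Psp_Lsp r k f : Psp r k f -> Lsp k f.
Proof. by apply: supported_sub => m /andP[]. Qed.

Lemma Hlsp_Hsp r l k f : Hlsp r l k f -> Hsp r k f.
Proof. by apply: supported_sub => m /and3P[-> ->]. Qed.

(** * Serendipity spaces *)

Lemma Jsp_eq r k f g : Jsp r k f -> f =1 g -> Jsp r k g.
Proof. by move=> [s [sH fE]] fg; exists s; split=> // m; rewrite -fg. Qed.

Lemma Jsp0 r k : Jsp r k pzero.
Proof. by exists [::]; split=> // m; rewrite big_nil. Qed.

Lemma JspD r k f g : Jsp r k f -> Jsp r k g -> Jsp r k (f \+ g).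
Proof.
move=> [s1 [H1 E1]] [s2 [H2 E2]]; exists (s1 ++ s2).
split; last by move=> m; rewrite big_cat /= E1 E2.
by move=> p /(List.in_app_or s1 s2 p)[/H1|/H2].
Qed.

Lemma Jsp_kform r k l q : (1 <= l)%N -> Hlsp (r + l - 1) l k.+1 q -> Jsp r k (kform q).
Proof. by move=> l1 qH; exists [:: (l, q)]; split=> [p [<-|[]] // | m]; rewrite big_seq1. Qed.

Lemma Jsp_kform_succ r k l q :
  Hlsp (r + l.+2 - 1) l.+2 k.+1 q -> Jsp r.+1 k (kform q).
Proof.
move=> qH; apply: (@Jsp_kform _ _ l.+1) => //.
by apply: supported_sub qH => m /and3P[/eqP-> -> /ltnW->]; rewrite andbT; apply/eqP; lia.
Qed.

Lemma Jsp_ind r k (P : pform -> Prop) :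
    (forall f g, f =1 g -> P f -> P g) -> P pzero ->
    (forall f g, P f -> P g -> P (f \+ g)) ->
    (forall l q, (1 <= l)%N -> Hlsp (r + l - 1) l k.+1 q -> P (kform q)) ->
  forall f, Jsp r k f -> P f.
Proof.
move=> Peq P0 PD Pgen f [s [sH fE]]; apply: (Peq _ _ (fun m => esym (fE m))).
elim: s sH {fE} => [|p s IHs] sH; first by move: P0; apply: Peq => m; rewrite big_nil.
have [l1 pH] := sH p (or_introl erefl).
have := PD _ _ (Pgen _ _ l1 pH) (IHs (fun x xs => sH x (or_intror xs))).
by apply: Peq => m; rewrite big_cons.
Qed.

Lemma Jsp_dscale r k c : forall f, Jsp r k f -> Jsp r k (dscale c f).
Proof.
apply: (Jsp_ind (P := fun f => Jsp r k (dscale c f))) => [f g fg fJ|||l q l1 qH].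
- by apply: Jsp_eq fJ _ => m; rewrite /dscale fg.
- by apply: Jsp_eq (Jsp0 _ _) _ => m; rewrite /dscale mulr0.
- by move=> f g fJ gJ; apply: Jsp_eq (JspD fJ gJ) _ => m; rewrite /dscale /= mulrDr.
- exact: Jsp_eq (Jsp_kform l1 (supported_dscale _ qH)) (kform_dscale c q).
Qed.

Lemma Jsp_Lsp r k : forall f, Jsp r k f -> Lsp k f.
Proof.
apply: Jsp_ind => [f g fg fL|||l q _ qH]; [exact: supported_eq fL fg | by [] | exact: supportedD |].
exact/kform_Lsp/Psp_Lsp/Hsp_Psp/Hlsp_Hsp/qH.
Qed.

Lemma dJsp0 r k : dJsp r k pzero.
Proof. by case: k => [|k] //=; exists pzero; split; [exact: Jsp0 | move=> m; rewrite dform0]. Qed.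

Lemma dJspD r k f g : dJsp r k f -> dJsp r k g -> dJsp r k (f \+ g).
Proof.
case: k => [|k] /=; first by move=> f0 g0 m; rewrite /= f0 g0 addr0.
move=> [f' [fJ fE]] [g' [gJ gE]]; exists (f' \+ g'); split; first exact: JspD.
by move=> m; rewrite dformD /= fE gE.
Qed.

Lemma dJsp_dscale r k c f : dJsp r k f -> dJsp r k (dscale c f).
Proof.
case: k => [|k] /=; first by move=> f0 m; rewrite /dscale f0 mulr0.
move=> [g [gJ fE]]; exists (dscale (fun d => c d.-1) g); split; first exact: Jsp_dscale.
by move=> m; rewrite dform_dscale /dscale fE.
Qed.

Lemma dJsp_Lsp r k f : dJsp r k f -> Lsp k f.
Proof.
case: k => [|k] /=; first by move=> f0 m; rewrite f0.
by move=> [g [/Jsp_Lsp/dform_Lsp gL fE]]; apply: supported_eq gL _ => m; rewrite fE.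
Qed.

Lemma dJsp_dform r k f : dJsp r k f -> dform f =1 pzero.
Proof.
case: k => [|k] /=; first by move=> f0 m; rewrite (eq_dform f0) dform0.
by move=> [g [_ fE]] m; rewrite (eq_dform fE) dform_dform.
Qed.

Lemma SspI r k p q h f : Psp r k p -> Jsp r k q -> dJsp r k h ->
  (forall m, f m = p m + q m + h m) -> Ssp r k f.
Proof. by move=> pP qJ hJ fE; exists p, q, h. Qed.

Lemma Ssp_eq r k f g : Ssp r k f -> f =1 g -> Ssp r k g.
Proof. by move=> [p [j [h [pP [jJ [hJ fE]]]]]] fg; apply: SspI pP jJ hJ _ => m; rewrite -fg. Qed.

Lemma Psp_Ssp r k f : Psp r k f -> Ssp r k f.
Proof. by move=> fP; apply: SspI fP (Jsp0 _ _) (dJsp0 _ _) _ => m; rewrite /= !addr0. Qed.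

Lemma Ssp0 r k : Ssp r k pzero.
Proof. exact: Psp_Ssp. Qed.

Lemma dJsp_Ssp r k f : dJsp r k f -> Ssp r k f.
Proof. by move=> fJ; apply: (SspI (p := pzero) _ (Jsp0 _ _) fJ) => [|m] //=; rewrite !add0r. Qed.

Lemma SspD r k f g : Ssp r k f -> Ssp r k g -> Ssp r k (f \+ g).
Proof.
move=> [p1 [j1 [h1 [P1 [J1 [D1 E1]]]]]] [p2 [j2 [h2 [P2 [J2 [D2 E2]]]]]].
apply: SspI (supportedD P1 P2) (JspD J1 J2) (dJspD D1 D2) _ => m.
by rewrite /= E1 E2; ring.
Qed.

Lemma Ssp_dscale r k c f : Ssp r k f -> Ssp r k (dscale c f).
Proof.
move=> [p [j [h [pP [jJ [hJ fE]]]]]].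
apply: SspI (supported_dscale c pP) (Jsp_dscale c jJ) (dJsp_dscale c hJ) _ => m.
by rewrite /dscale fE !mulrDr.
Qed.

Lemma Ssp_Lsp r k f : Ssp r k f -> Lsp k f.
Proof.
move=> [p [j [h [/Psp_Lsp pL [/Jsp_Lsp jL [/dJsp_Lsp hL fE]]]]]].
by apply: supported_eq (supportedD (supportedD pL jL) hL) _ => m; rewrite fE.
Qed.

Lemma Jsp_dform r k : forall f, Jsp r k f -> Ssp r k.+1 (dform f).
Proof.
apply: (Jsp_ind (P := fun f => Ssp r k.+1 (dform f))) => [f g fg fS|||l q].
- exact: Ssp_eq fS (eq_dform fg).
- exact: Ssp_eq (Ssp0 _ _) (fun m => esym (dform0 m)).
- by move=> f g fS gS; apply: Ssp_eq (SspD fS gS) _ => m; rewrite dformD.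
case: l => [|[|l]] // _ qH.
  by rewrite addnK in qH; apply/Psp_Ssp/Hsp_Psp/dform_Hsp/kform_Hsp/Hlsp_Hsp/qH.
by apply/dJsp_Ssp; exists (kform q); split=> //; apply: Jsp_kform_succ qH.
Qed.

Lemma Ssp_dform r k f : Ssp r k f -> Ssp r k.+1 (dform f).
Proof.
move=> [p [j [h [pP [jJ [hJ fE]]]]]].
apply: Ssp_eq (SspD (Psp_Ssp (Psp_dform pP)) (Jsp_dform jJ)) _ => m.
by rewrite (eq_dform (fE : f =1 p \+ j \+ h)) dformD /= dformD /= (dJsp_dform hJ) addr0.
Qed.

Lemma SminusI r k p q f : Ssp r.-1 k p -> Ssp r.-1 k.+1 q ->
  (forall m, f m = p m + kform q m) -> Sminus r k f.
Proof. by move=> pS qS fE; exists p, q. Qed.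

Lemma Sminus_Lsp r k f : Sminus r k f -> Lsp k f.
Proof.
move=> [a [b [/Ssp_Lsp aL [/Ssp_Lsp/kform_Lsp bL fE]]]].
by apply: supported_eq (supportedD aL bL) _ => m; rewrite fE.
Qed.

Lemma dform_kform_Lsp k f : Lsp k f ->
  forall m, dform (kform f) m = (mdeg m.1 + k)%:R * f m - kform (dform f) m.
Proof.
move=> fL m; apply/eqP; rewrite eq_sym subr_eq dform_kform_homotopy.
by have [->|/fL->] := eqVneq #|m.2| k; rewrite ?mulr0.
Qed.

Lemma Sminus_dform r k f : Sminus r k f -> Sminus r k.+1 (dform f).
Proof.
move=> [a [b [aS [bS fE]]]].
apply: (SminusI (SspD (Ssp_dform aS) (Ssp_dscale (fun d => (d + k.+1)%:R) bS))
                (Ssp_dscale (fun=> -1) (Ssp_dform bS))) => m.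
rewrite (eq_dform (fE : f =1 a \+ kform b)) dformD /= (dform_kform_Lsp (Ssp_Lsp bS)).
by rewrite (kform_dscale (fun=> -1)) /dscale; ring.
Qed.

Lemma mdeg_eq0 a : (mdeg a == 0)%N = (a == [ffun => 0%N]).
Proof.
rewrite /mdeg sum_nat_eq0; apply/forallP/eqP => [a0|-> i]; last by rewrite ffunE.
by apply/ffunP=> i; rewrite ffunE; apply/eqP/a0.
Qed.

Lemma Sminus_const r (c : R) : Sminus r 0 (constf (n := n) c).
Proof.
apply: (SminusI (Psp_Ssp _) (Ssp0 _ _)) => [[a s]|m]; last by rewrite kform0 addr0.
rewrite /constf /=; case: ifP => // /andP[/eqP-> /eqP->].
by rewrite cards0 /mdeg big1 // => i _; rewrite ffunE.
Qed.

Lemma closed_Lsp0_const f : Lsp 0 f -> dform f =1 pzero ->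
  f =1 constf (f ([ffun=> 0%N], set0)).
Proof.
move=> fL df [a s]; have := dform_kform_homotopy f (a, s).
rewrite (eq_dform (kform_Lsp0 fL)) dform0 (eq_kform df) kform0 add0r /constf /=.
case: ifP => [/andP[/eqP-> /eqP->] // | a0s] /esym/eqP.
by rewrite mulf_eq0 pnatr_eq0 addn_eq0 mdeg_eq0 cards_eq0 a0s => /eqP.
Qed.

(* By the homotopy formula, dform o kform multiplies a closed k-form that is
   homogeneous of degree r by r + k. *)
Definition kprimitive k f : pform := kform (dscale (fun d => (d + k)%:R^-1) f).

Lemma dform_kprimitive k f : Lsp k.+1 f -> dform f =1 pzero -> f =1 dform (kprimitive k.+1 f).
Proof.
move=> fL df m; rewrite /kprimitive (dform_kform_Lsp (supported_dscale _ fL)).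
rewrite (eq_kform (g := pzero)) => [|m']; last by rewrite dform_dscale df mulr0.
by rewrite kform0 subr0 /dscale mulrA mulfV ?mul1r // pnatr_eq0 addnS.
Qed.

Lemma Sminus_kprimitive r k f : Sminus r k.+1 f -> Sminus r k (kprimitive k.+1 f).
Proof.
move=> [a [b [aS [bS fE]]]]; set c := fun d => (d + k.+1)%:R^-1 : R.
apply: (SminusI (Ssp0 _ _) (Ssp_dscale c aS)) => m.
have cfE : dscale c f =1 dscale c a \+ kform (dscale (c \o succn) b).
  by move=> m'; rewrite /= kform_dscale /dscale fE mulrDr.
by rewrite /kprimitive (eq_kform cfE) kformD /= kform_kform addr0 add0r.
Qed.

End Forms.

Theorem mainTheorem5 (R : realFieldType) (n r : nat) :
  (1 <= n)%N -> (1 <= r)%N ->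
  (* the maps are well defined *)
  (forall c : R, Sminus r 0 (@constf R n c)) /\
  (forall (k : nat) (f : pform R n), (k < n)%N -> Sminus r k f -> Sminus r k.+1 (dform f)) /\
  (* exactness at R : the inclusion is injective *)
  (forall c c' : R, (forall m, @constf R n c m = @constf R n c' m) -> c = c') /\
  (* exactness at S_r^- L^0 : ker d = constants *)
  (forall f : pform R n, Sminus r 0 f -> (forall m, dform f m = 0) ->
     exists c : R, forall m, f m = @constf R n c m) /\
  (* exactness at S_r^- L^(k+1), 0 <= k < n (for k+1 = n: d is onto) *)
  (forall (k : nat) (f : pform R n), (k < n)%N -> Sminus r k.+1 f ->
     (forall m, dform f m = 0) ->
     exists g, Sminus r k g /\ forall m, f m = dform g m).
Proof.
move=> _ _; split; [|split; [|split; [|split]]].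
- exact: Sminus_const.
- by move=> k f _; exact: Sminus_dform.
- by move=> c c' /(_ ([ffun=> 0%N], set0)); rewrite /constf /= !eqxx.
- by move=> f fS df; eexists; exact: closed_Lsp0_const (Sminus_Lsp fS) df.
- move=> k f _ fS df; exists (kprimitive k.+1 f); split; first exact: Sminus_kprimitive.
  exact: dform_kprimitive (Sminus_Lsp fS) df.
Qed.
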